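(* Let $\mathbf{k}$ be a commutative domain of characteristic zero, and let $\omega=xy-(\phi(x)+y\psi(x))\in\mathcal{T}$ with $\phi,\psi\in\mathbf{k}[x]$. The following are equivalent: (a) for every $\lambda\in\mathbf{k}$ and every commutative Rota-Baxter $\mathbf{k}$-algebra $(R,P)$ of weight $\lambda$, the $\omega$-cover $\widetilde{P}$ of $P$ on the $\lambda$-Hurwitz series algebra $(R^{\mathbb{N}},\partial_R)$ is again a Rota-Baxter operator of weight $\lambda$; (b) $\omega\in\mathcal{T}_{\mathbf{k}}:=\{xy,\ xy-1,\ xy-yx\}$.
   Context: All algebras are commutative $\mathbf{k}$-algebras with identity. $\mathbf{k}\langle x,y\rangle$ is the noncommutative polynomial algebra and $\mathcal{T}:=\{xy-(\phi(x)+y\psi(x))\mid \phi,\psi\in\mathbf{k}[x]\}$. For $\lambda\in\mathbf{k}$, a Rota-Baxter operator of weight $\lambda$ on an algebra $R$ is a $\mathbf{k}$-linear $P:R\to R$ with $P(x)P(y)=P(P(x)y)+P(xP(y))+\lambda P(xy)$ for all $x,y\in R$. For an algebra $R$, $R^{\mathbb{N}}$ is the set of sequences $f=(f_n)_{n\in\mathbb N}$ in $R$ with componentwise module structure and the $\lambda$-Hurwitz product $(fg)_n=\sum_{k=0}^{n}\sum_{j=0}^{n-k}\binom{n}{k}\binom{n-k}{j}\lambda^k f_{n-j}g_{k+j}$; $\partial_R:R^{\mathbb N}\to R^{\mathbb N}$ is $(\partial_R f)_n=f_{n+1}$. Write $\phi(x)=\sum_{i=0}^r a_ix^i$, $\psi(x)=\sum_{j=0}^s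 b_jx^j$. Given a linear operator $P$ on $R$, the $\omega$-cover of $P$ is the unique linear operator $\widetilde P$ on $R^{\mathbb N}$ with $\widetilde P(f)_0=P(f_0)$ and $\partial_R\widetilde P=\phi(\partial_R)+\widetilde P\psi(\partial_R)$; equivalently, writing $\widetilde P_n(f):=\widetilde P(f)_n$, for all $n\ge1$: $\widetilde P_n(f)=\sum_{i=0}^r a_i f_{n-1+i}+\sum_{j=0}^s b_j\widetilde P_{n-1}(\partial_R^j f)$. *)

From HB Require Import structures.
From mathcomp Require Import all_boot all_order all_algebra.
Set Implicit Arguments. Unset Strict Implicit. Unset Printing Implicit Defensive.
Import Order.TTheory GRing.Theory Num.Theory.
Local Open Scope ring_scope.

Section Defs.
Variable k : idomainType.
Variable R : comAlgType k.

Definition is_RB_op (lam : k) (P : R -> R) : Prop :=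
  (forall (a : k) (u v : R), P (a *: u + v) = a *: P u + P v) /\
  (forall u v : R, P u * P v = P (P u * v) + P (u * P v) + lam *: P (u * v)).

Definition seq_add (f g : nat -> R) : nat -> R := fun n => f n + g n.
Definition seq_scale (a : k) (f : nat -> R) : nat -> R := fun n => a *: f n.

Definition hurwitz_mul (lam : k) (f g : nat -> R) : nat -> R :=
  fun n => \sum_(i < n.+1) \sum_(j < (n - i)%N.+1)
     ((lam ^+ i *: (f (n - j)%N * g (i + j)%N)) *+ ('C(n, i) * 'C(n - i, j))%N).

Definition seq_shift (f : nat -> R) : nat -> R := fun n => f n.+1.

Fixpoint omega_cover_n (phi psi : {poly k}) (P : R -> R) (n : nat) (f : nat -> R) : R :=
  match n with
  | 0 => P (f 0%N)
  | n'.+1 => \sum_(i < size phi) phi`_i *: f (n' + i)%N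
             + \sum_(j < size psi) psi`_j *: omega_cover_n phi psi P n' (fun m => f (m + j)%N)
  end.

Definition omega_cover (phi psi : {poly k}) (P : R -> R) (f : nat -> R) : nat -> R :=
  fun n => omega_cover_n phi psi P n f.

Definition is_RB_seq_op (lam : k) (Q : (nat -> R) -> (nat -> R)) : Prop :=
  forall (f g : nat -> R) (n : nat),
    hurwitz_mul lam (Q f) (Q g) n =
    seq_add (seq_add (Q (hurwitz_mul lam (Q f) g)) (Q (hurwitz_mul lam f (Q g))))
            (seq_scale lam (Q (hurwitz_mul lam f g))) n.
End Defs.

(* The shift is a weight-lam derivation of the Hurwitz product, so the
   Rota-Baxter identity for a cover propagates from index n to n+1 as soon as
   the cover interacts simply with the shift: the shifted cover is 0 for xy
   and the identity for xy - 1, and for xy - yx the cover is P applied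
   termwise.
   Conversely, test the hypothesis on R = k[t].  The zero operator is
   Rota-Baxter of every weight and its cover is k-linear; evaluating the
   identity on delta sequences at two weights (characteristic 0 cancels the
   integers that appear) forces phi(0) to be 0 or 1, then phi = 0, or
   phi = 1 and psi = 0.  When phi = 0, the operator u |-> c u has weight -c
   and its cover maps the geometric sequence (r q^n) to (c r (psi o q)^n);
   this gives psi(0) = 0 and psi o psi = psi, so psi is 0 or t. *)

From HB Require Import structures.
From mathcomp Require Import all_boot all_order all_algebra ring zify.
From Stdlib Require Import FunctionalExtensionality.
Import GRing.Theory.
Local Open Scope ring_scope.

Lemma trinomialS n i j :
  ('C(n.+1, i) * 'C(n.+1 - i, j) =
   'C(n, i) * 'C(n - i, j)
   + (if j is j'.+1 then 'C(n, i) * 'C(n - i, j') else 0)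
   + (if i is i'.+1 then 'C(n, i') * 'C(n - i', j) else 0))%N.
Proof.
case: i => [|i]; case: j => [|j].
- by rewrite !bin0 !muln1 !addn0.
- by rewrite !bin0 !mul1n !subn0 binS addn0.
- by rewrite !bin0 !muln1 binS addn0.
rewrite subSS binS mulnDl -addnA [X in _ = X]addnA -mulnDr; congr (_ + _)%N.
have [lt_in|le_ni] := ltnP i n; first by rewrite -(subnSK lt_in) binS addnC.
by rewrite bin_small ?mul0n // ltnS.
Qed.

Lemma scale_sum3_transpose (k : nzRingType) (V : lmodType k) (c : k)
    (a1 a2 a3 b1 b2 b3 d1 d2 d3 : V) :
  a1 + a2 + c *: a3 + (b1 + b2 + c *: b3) + c *: (d1 + d2 + c *: d3) =
  a1 + b1 + c *: d1 + (a2 + b2 + c *: d2) + c *: (a3 + b3 + c *: d3).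
Proof.
rewrite !scalerDr !scalerA (addrACA (a1 + a2)) (addrACA a1) (addrACA (a1 + _ + (a2 + _))).
by rewrite (addrACA (a1 + _)).
Qed.

Lemma sum_coef_single (k : nzRingType) (V : lmodType k) (p : {poly k}) (F : nat -> V) m :
  (forall i, i != m -> F i = 0) -> \sum_(i < size p) p`_i *: F i = p`_m *: F m.
Proof.
move=> F_single; have [lt_m_p|le_p_m] := ltnP m (size p).
  rewrite (bigD1 (Ordinal lt_m_p)) //= big1 ?addr0 // => i ne_im.
  by rewrite F_single ?scaler0 //; apply: contra ne_im => /eqP eq_im; apply/eqP/val_inj.
rewrite big1 ?nth_default ?scale0r // => i _.
by rewrite F_single ?scaler0 // neq_ltn (leq_trans (ltn_ord i) le_p_m).
Qed.
Arguments sum_coef_single {k V p} F m.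

Lemma eq_of_subr_eq {R : zmodType} {x y a b : R} : a = b -> x - y = a - b -> x = y.
Proof. by move=> -> /eqP; rewrite subrr subr_eq0 => /eqP. Qed.

Lemma scale_affine_eq {k : nzRingType} {V : lmodType k} {u v w : V} :
  (forall c : k, c *: u = w + c *: v) -> u = v.
Proof.
move=> Euv; have := Euv 0; rewrite !scale0r addr0 => w0.
by have := Euv 1; rewrite -w0 add0r !scale1r.
Qed.

Lemma pchar0_mulrn_eq0 (k : idomainType) (x : k) n :
  [pchar k] =i pred0 -> (x *+ n == 0) = (n == 0)%N || (x == 0).
Proof. by move=> k0; rewrite -mulr_natr mulf_eq0 orbC (pcharf0P _).1. Qed.

Lemma comp_poly_idem {k : idomainType} {p : {poly k}} :
  p`_0 = 0 -> p \Po p = p -> p = 0 \/ p = 'X.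
Proof.
move=> p0 pp_p; have [le_p1|lt1p] := leqP (size p) 1.
  by left; rewrite (size1_polyC le_p1) p0.
have size_p2 : size p = 2%N.
  have := size_comp_poly p p; rewrite pp_p; case: (size p) lt1p => [|[|d]] //=; nia.
have p_lin : p = p`_1 *: 'X.
  apply/polyP => -[|[|i]]; rewrite coefZ coefX /= ?mulr0 ?mulr1 //.
  by rewrite nth_default // size_p2.
have p1_nz : p`_1 != 0.
  by have := lead_coef_eq0 p; rewrite /lead_coef size_p2 => ->; rewrite -size_poly_eq0 size_p2.
right; move: pp_p; rewrite p_lin comp_polyZ comp_polyX scalerA.
move=> /(congr1 (fun q : {poly k} => q`_1)); rewrite !coefZ coefX /= !mulr1.
move=> /eqP; rewrite -[X in _ == X]mulr1 (inj_eq (mulfI p1_nz)) => /eqP ->.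
by rewrite scale1r.
Qed.

Section HurwitzProduct.
Variables (k : idomainType) (R : comAlgType k) (lam : k).
Implicit Types (f g : nat -> R) (r s p q : R).

Local Notation hmul := (hurwitz_mul lam).

Definition seq0 : nat -> R := fun=> 0.
Definition seq_delta (m : nat) : nat -> R := fun n => if n == m then 1 else 0.
Definition seq_geom r q : nat -> R := fun n => r * q ^+ n.

Let hterm f g n (i j : nat) : R :=
  (lam ^+ i *: (f (n - j)%N * g (i + j)%N)) *+ ('C(n, i) * 'C(n - i, j)).

Let hurwitz_mul_widen f g n N1 N2 : (n < N1)%N -> (n < N2)%N ->
  hmul f g n = \sum_(i < N1) \sum_(j < N2) hterm f g n i j.
Proof.
move=> ltnN1 ltnN2; rewrite /hurwitz_mul.
rewrite (big_ord_widen N1 (fun i => \sum_(j < (n - i).+1) hterm f g n i j) ltnN1).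
rewrite big_mkcond; apply: eq_bigr => i _; case: ifP => lt_in.
  have leN2 : ((n - i).+1 <= N2)%N by exact: leq_ltn_trans (leq_subr i n) ltnN2.
  rewrite (big_ord_widen N2 (hterm f g n i) leN2) big_mkcond.
  apply: eq_bigr => j _; case: ifP => // lt_j.
  by rewrite /hterm (@bin_small (n - i) j) ?muln0 ?mulr0n // ltnNge -ltnS lt_j.
rewrite big1 // => j _.
by rewrite /hterm bin_small ?mul0n ?mulr0n // ltnNge -ltnS lt_in.
Qed.

Lemma hurwitz_mulS f g n : hmul f g n.+1 =
  hmul (seq_shift f) g n + hmul f (seq_shift g) n
  + lam *: hmul (seq_shift f) (seq_shift g) n.
Proof.
rewrite (hurwitz_mul_widen f g n.+1 n.+2 n.+2) //.
rewrite (hurwitz_mul_widen (seq_shift f) g n n.+2 n.+2) //.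
rewrite (hurwitz_mul_widen f (seq_shift g) n n.+2 n.+1) //.
rewrite (hurwitz_mul_widen (seq_shift f) (seq_shift g) n n.+1 n.+2) //.
rewrite /hterm.
under eq_bigr => i _ do under eq_bigr => j _ do rewrite trinomialS !mulrnDr.
under eq_bigr => i _ do rewrite !big_split /=.
have vanish i j : (n < j)%N -> ('C(n, i) * 'C(n - i, j))%N = 0%N.
  by move=> lt_nj; rewrite (@bin_small (n - i) j) ?muln0 // (leq_ltn_trans (leq_subr i n)).
rewrite !big_split /=; congr (_ + _ + _).
- apply: eq_bigr => i _; apply: eq_bigr => j _.
  have [le_jn|lt_nj] := leqP j n; first by rewrite /seq_shift subSn.
  by rewrite vanish ?mulr0n.
- apply: eq_bigr => i _; rewrite big_ord_recl /= mulr0n add0r.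
  by apply: eq_bigr => j _; rewrite /bump /= add1n subSS addnS add0n.
- rewrite big_ord_recl /= big1 ?add0r; last by move=> j _; rewrite mulr0n.
  rewrite scaler_sumr; apply: eq_bigr => i _; rewrite /bump /= add1n scaler_sumr.
  apply: eq_bigr => j _; rewrite -scalerMnr scalerA -exprS /seq_shift addSn.
  have [le_jn|lt_nj] := leqP j n; first by rewrite subSn.
  by rewrite vanish ?mulr0n.
Qed.

Lemma hurwitz_mul0 f g : hmul f g 0 = f 0%N * g 0%N.
Proof. by rewrite /hurwitz_mul !big_ord1 /= expr0 scale1r mulr1n. Qed.

Lemma hurwitz_mul1 f g :
  hmul f g 1 = f 1%N * g 0%N + f 0%N * g 1%N + lam *: (f 1%N * g 1%N).
Proof. by rewrite hurwitz_mulS !hurwitz_mul0. Qed.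

Lemma hurwitz_mulr0 f : hmul f seq0 = seq0.
Proof.
apply: functional_extensionality => n; rewrite /hurwitz_mul big1 // => i _.
by rewrite big1 // => j _; rewrite mulr0 scaler0 mul0rn.
Qed.

Lemma hurwitz_mul0r f : hmul seq0 f = seq0.
Proof.
apply: functional_extensionality => n; rewrite /hurwitz_mul big1 // => i _.
by rewrite big1 // => j _; rewrite mul0r scaler0 mul0rn.
Qed.

Lemma seq_shift_delta0 : seq_shift (seq_delta 0) = seq0.
Proof. by apply: functional_extensionality. Qed.

Lemma seq_shift_deltaS m : seq_shift (seq_delta m.+1) = seq_delta m.
Proof. by apply: functional_extensionality. Qed.

Lemma hurwitz_mulr1 f : hmul f (seq_delta 0) = f.
Proof.
apply: functional_extensionality => n; elim: n f => [|n IHn] f.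
  by rewrite hurwitz_mul0 mulr1.
by rewrite hurwitz_mulS seq_shift_delta0 !hurwitz_mulr0 scaler0 !addr0 IHn.
Qed.

Lemma hurwitz_mul1r f : hmul (seq_delta 0) f = f.
Proof.
apply: functional_extensionality => n; elim: n f => [|n IHn] f.
  by rewrite hurwitz_mul0 mul1r.
by rewrite hurwitz_mulS seq_shift_delta0 !hurwitz_mul0r scaler0 addr0 add0r IHn.
Qed.

Lemma hurwitz_mul_delta1 f :
  hmul f (seq_delta 1) = fun n => (f n.-1 + lam *: f n) *+ n.
Proof.
apply: functional_extensionality => n; elim: n f => [|n IHn] f; first by rewrite hurwitz_mul0 mulr0.
rewrite hurwitz_mulS seq_shift_deltaS !hurwitz_mulr1 IHn /seq_shift.
case: n {IHn} => [|n] /=; first by rewrite !mulr0n !add0r.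
by rewrite [in RHS]mulrSr addrA.
Qed.

Lemma seq_shift_geom r q : seq_shift (seq_geom r q) = seq_geom (r * q) q.
Proof. by apply: functional_extensionality => n; rewrite /seq_shift /seq_geom exprS mulrA. Qed.

Lemma hurwitz_mul_geom r s p q :
  hmul (seq_geom r p) (seq_geom s q) = seq_geom (r * s) (p + q + lam *: (p * q)).
Proof.
apply: functional_extensionality => n; elim: n r s => [|n IHn] r s.
  by rewrite hurwitz_mul0 /seq_geom !expr0 !mulr1.
rewrite hurwitz_mulS !seq_shift_geom !IHn /seq_geom exprS.
set X := _ ^+ n; rewrite [lam *: (_ * X)]scalerAl -!mulrDl [RHS]mulrA; congr (_ * X).
by rewrite !mulrDr -scalerAr mulrACA mulrA (mulrAC r p s).
Qed.

End HurwitzProduct.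
Arguments seq0 {k R}.
Arguments seq_delta {k R}.
Arguments seq_geom {k R}.

Section LinearOperator.
Variables (k : idomainType) (R : comAlgType k) (P : R -> R).
Hypothesis P_linear : forall (a : k) (u v : R), P (a *: u + v) = a *: P u + P v.

Lemma linear_op0 : P 0 = 0.
Proof.
have := P_linear 1 0 0; rewrite !scale1r !addr0 => P0_twice.
by apply: (addrI (P 0)); rewrite addr0 -P0_twice.
Qed.

Lemma linear_opD u v : P (u + v) = P u + P v.
Proof. by have := P_linear 1 u v; rewrite !scale1r. Qed.

Lemma linear_opZ a u : P (a *: u) = a *: P u.
Proof. by rewrite -[a *: u]addr0 P_linear linear_op0 addr0. Qed.

End LinearOperator.
Arguments linear_opD {k R P}.
Arguments linear_opZ {k R P}.

Lemma zero_RB_op {k : idomainType} {R : comAlgType k} (lam : k) :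
  is_RB_op lam (fun _ : R => 0).
Proof. by split=> [a u v|u v]; rewrite ?scaler0 ?addr0 ?mulr0. Qed.

Lemma scale_RB_op {k : idomainType} {R : comAlgType k} (c : k) :
  is_RB_op (-c) ( *:%R c : R -> R).
Proof.
split=> [a u v|u v] /=; first by rewrite scalerDr !scalerA mulrC.
by rewrite -scalerAl -!scalerAr -scalerAl !scalerA mulNr scaleNr addrK.
Qed.

Section OmegaCover.
Variables (k : idomainType) (R : comAlgType k) (phi psi : {poly k}) (P : R -> R).
Implicit Types f g : nat -> R.

Local Notation Qn := (omega_cover_n phi psi P).
Local Notation Q := (omega_cover phi psi P).

Lemma omega_cover_RB0 lam f g : is_RB_op lam P ->
  hurwitz_mul lam (Q f) (Q g) 0 = Q (hurwitz_mul lam (Q f) g) 0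
    + Q (hurwitz_mul lam f (Q g)) 0 + lam *: Q (hurwitz_mul lam f g) 0.
Proof. by move=> [_ RB_P]; rewrite /omega_cover /= !hurwitz_mul0 RB_P. Qed.

Hypothesis P_linear : forall (a : k) u v, P (a *: u + v) = a *: P u + P v.

Lemma omega_cover_n_linear n a f g :
  Qn n (fun m => a *: f m + g m) = a *: Qn n f + Qn n g.
Proof.
elim: n f g => [|n IHn] f g /=; first exact: P_linear.
under eq_bigr => i _ do rewrite scalerDr scalerA mulrC -scalerA.
under [in X in _ + X = _]eq_bigr => j _ do rewrite IHn scalerDr scalerA mulrC -scalerA.
by rewrite !big_split /= -!scaler_sumr scalerDr addrACA.
Qed.

Lemma omega_cover_n_seq0 n : Qn n seq0 = 0.
Proof.
have := omega_cover_n_linear n 1 seq0 seq0; rewrite scale1r.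
have -> : (fun m => 1 *: seq0 m + seq0 m) = seq0 :> (nat -> R).
  by apply: functional_extensionality => m; rewrite /seq0 scaler0 addr0.
by move=> Q0_twice; apply: (addrI (Qn n seq0)); rewrite addr0 -Q0_twice.
Qed.

End OmegaCover.

Section CoverSolutions.
Variables (k : idomainType) (R : comAlgType k) (lam : k) (P : R -> R).
Hypothesis RB_P : is_RB_op lam P.
Implicit Types f g : nat -> R.

Lemma omega_cover00S f n : omega_cover 0 0 P f n.+1 = 0.
Proof. by rewrite /omega_cover /= size_poly0 !big_ord0 addr0. Qed.

Lemma omega_cover10S f n : omega_cover 1 0 P f n.+1 = f n.
Proof.
by rewrite /omega_cover /= size_poly0 size_poly1 big_ord0 big_ord1 coef1 scale1r addn0 addr0.
Qed.

Lemma omega_cover0X f n : omega_cover 0 'X P f n = P (f n).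
Proof.
rewrite /omega_cover; elim: n f => [|n IHn] f //=.
rewrite size_poly0 size_polyX !big_ord_recr !big_ord0 /= !add0r !coefX /=.
by rewrite scale0r scale1r add0r IHn addn1.
Qed.

Lemma omega_cover00_RB : is_RB_seq_op lam (omega_cover 0 0 P).
Proof.
have shiftQ f : seq_shift (omega_cover 0 0 P f) = seq0.
  by apply: functional_extensionality => n; apply: omega_cover00S.
move=> f g [|n]; rewrite /seq_add /seq_scale; first exact: omega_cover_RB0.
rewrite hurwitz_mulS !shiftQ !hurwitz_mul0r !hurwitz_mulr0 !omega_cover00S.
by rewrite /seq0 scaler0 !addr0.
Qed.

Lemma omega_cover10_RB : is_RB_seq_op lam (omega_cover 1 0 P).
Proof.
have shiftQ f : seq_shift (omega_cover 1 0 P f) = f.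
  by apply: functional_extensionality => n; apply: omega_cover10S.
move=> f g [|n]; rewrite /seq_add /seq_scale; first exact: omega_cover_RB0.
by rewrite hurwitz_mulS !shiftQ !omega_cover10S (addrC (hurwitz_mul _ f _ _)).
Qed.

Lemma omega_cover0X_RB : is_RB_seq_op lam (omega_cover 0 'X P).
Proof.
have linP := RB_P.1.
move=> f g n; rewrite /seq_add /seq_scale !omega_cover0X.
elim: n f g => [|n IHn] f g; first by rewrite !hurwitz_mul0 !omega_cover0X RB_P.2.
have shiftQ h : seq_shift (omega_cover 0 'X P h) = omega_cover 0 'X P (seq_shift h).
  by apply: functional_extensionality => m; rewrite /seq_shift !omega_cover0X.
rewrite !hurwitz_mulS !shiftQ !IHn !(linear_opD linP) !(linear_opZ linP).
exact: scale_sum3_transpose.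
Qed.

End CoverSolutions.

Section ZeroOperatorCover.
Context {k : idomainType} {phi psi : {poly k}}.
Implicit Types f g : nat -> {poly k}.

Local Notation zero_op := (fun _ : {poly k} => 0 : {poly k}).
Local Notation Qn := (omega_cover_n phi psi zero_op).
Local Notation Q := (omega_cover phi psi zero_op).

Hypothesis k_char0 : [pchar k] =i pred0.
Hypothesis zero_cover_RB : forall lam, is_RB_seq_op lam (omega_cover phi psi zero_op).

Let RB_at lam f g n : hurwitz_mul lam (Q f) (Q g) n = Q (hurwitz_mul lam (Q f) g) n
    + Q (hurwitz_mul lam f (Q g)) n + lam *: Q (hurwitz_mul lam f g) n.
Proof. exact: zero_cover_RB. Qed.

Let zero_op_linear (a : k) (u v : {poly k}) : zero_op (a *: u + v) = a *: zero_op u + zero_op v.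
Proof. by rewrite scaler0 addr0. Qed.

Lemma zero_cover0 f : Q f 0 = 0. Proof. by []. Qed.

Lemma zero_cover1 f : Q f 1 = \sum_(i < size phi) phi`_i *: f i.
Proof. by rewrite /omega_cover /= [X in _ + X]big1 ?addr0 // => j _; rewrite scaler0. Qed.

Lemma zero_cover_delta0S n :
  Q (seq_delta 0) n.+1 = phi`_0 *: seq_delta 0 n + psi`_0 *: Q (seq_delta 0) n.
Proof.
rewrite /omega_cover [LHS]/=; congr (_ + _).
  rewrite (sum_coef_single (fun i => seq_delta 0 (n + i)) 0) ?addn0 // => -[|i] // _.
  by rewrite /seq_delta addnS.
rewrite (sum_coef_single (fun j => Qn n (fun m => seq_delta 0 (m + j))) 0) => [|[|j] // _].
  by congr (_ *: Qn n _); apply: functional_extensionality => m; rewrite addn0.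
have -> : (fun m => seq_delta 0 (m + j.+1)) = seq0 :> (nat -> {poly k}).
  by apply: functional_extensionality => m; rewrite /seq_delta addnS.
by rewrite omega_cover_n_seq0 ?scaler0.
Qed.

Lemma zero_cover_delta0 n : Q (seq_delta 0) n.+1 = (phi`_0 * psi`_0 ^+ n)%:P.
Proof.
elim: n => [|n IHn]; rewrite zero_cover_delta0S.
  by rewrite zero_cover0 scaler0 addr0 /seq_delta /= expr0 mulr1 alg_polyC.
by rewrite IHn /seq_delta /= scaler0 add0r exprS mulrCA -mul_polyC !polyCM.
Qed.

Lemma zero_cover_delta1 m : Q (seq_delta m) 1 = (phi`_m)%:P.
Proof.
rewrite zero_cover1 (sum_coef_single (seq_delta m) m) /seq_delta ?eqxx ?alg_polyC //.
by move=> i /negbTE ->.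
Qed.

Lemma zero_cover_coef0 : phi`_0 = 0 \/ phi`_0 = 1.
Proof.
have Q01 : Q (seq_delta 0) 1 = (phi`_0)%:P by rewrite zero_cover_delta0 expr0 mulr1.
have idem : phi`_0 * phi`_0 = phi`_0.
  apply/polyC_inj/(scale_affine_eq (w := Q (Q (seq_delta 0)) 1 *+ 2)) => c.
  have := RB_at c (seq_delta 0) (seq_delta 0) 1.
  rewrite !hurwitz_mulr1 hurwitz_mul1r hurwitz_mul1 Q01 zero_cover0 mulr0 mul0r !add0r.
  by rewrite polyCM mulr2n => ->.
have : phi`_0 * (phi`_0 - 1) == 0 by rewrite mulrBr mulr1 idem subrr.
by rewrite mulf_eq0 subr_eq0 => /orP[] /eqP; [left | right].
Qed.

Lemma zero_cover_phi_eq0 : phi`_0 = 0 -> phi = 0.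
Proof.
move=> phi00.
have Qdelta0 : Q (seq_delta 0) = seq0.
  apply: functional_extensionality => -[|n] //.
  by rewrite zero_cover_delta0 phi00 mul0r.
have Q_eq0 f n : Q f n = 0.
  symmetry; apply: (scale_affine_eq (w := Q (Q f) n)) => c.
  have := RB_at c f (seq_delta 0) n.
  rewrite Qdelta0 !hurwitz_mulr0 !hurwitz_mulr1 /omega_cover omega_cover_n_seq0 //.
  by rewrite scaler0 addr0 => <-; rewrite /seq0.
apply/polyP => m; have := Q_eq0 (seq_delta m) 1.
by rewrite zero_cover_delta1 coef0 => /polyC_inj.
Qed.

Lemma zero_cover_psi_coef0 : phi`_0 = 1 -> psi`_0 = 0.
Proof.
move=> phi01.
have Qdelta0 n : Q (seq_delta 0) n.+1 = (psi`_0 ^+ n)%:P.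
  by rewrite zero_cover_delta0 phi01 mul1r.
have E1 := RB_at 1 (seq_delta 0) (seq_delta 0) 2.
have E2 := RB_at (-1) (seq_delta 0) (seq_delta 0) 2.
rewrite !hurwitz_mulr1 hurwitz_mul1r hurwitz_mulS !hurwitz_mul1 /seq_shift in E1.
rewrite !hurwitz_mulr1 hurwitz_mul1r hurwitz_mulS !hurwitz_mul1 /seq_shift in E2.
rewrite !Qdelta0 !zero_cover0 expr0 expr1 -!mul_polyC polyC1 in E1.
rewrite !Qdelta0 !zero_cover0 expr0 expr1 -!mul_polyC polyCN polyC1 in E2.
have : (psi`_0)%:P *+ 6 = 0.
  by apply: (eq_of_subr_eq (congr2 (fun x y => x - y) E1 E2)); ring.
by rewrite -polyCMn => /polyC_inj /eqP; rewrite pchar0_mulrn_eq0 //= => /eqP.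
Qed.

Section UnitConstantTerm.
Hypothesis phi01 : phi`_0 = 1.

Lemma zero_cover_delta0_eq : Q (seq_delta 0) = seq_delta 1.
Proof.
apply: functional_extensionality => -[|n] //.
by rewrite zero_cover_delta0 phi01 zero_cover_psi_coef0 // mul1r expr0n; case: n.
Qed.

(* The part of the identity for [f] and [seq_delta 0] that is linear in
   the weight. *)
Lemma zero_cover_weight f n : Q (fun m => f m *+ m) n + Q f n = Q f n *+ n.
Proof.
symmetry; apply: (scale_affine_eq
  (w := Q (Q f) n + Q (fun m => f m.-1 *+ m) n - Q f n.-1 *+ n)) => c.
have := RB_at c f (seq_delta 0) n.
rewrite zero_cover_delta0_eq !hurwitz_mulr1 !hurwitz_mul_delta1.
have -> : (fun m => (f m.-1 + c *: f m) *+ m) = fun m => c *: (f m *+ m) + f m.-1 *+ m.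
  by apply: functional_extensionality => m; rewrite mulrnDl scalerMnr addrC.
rewrite /omega_cover omega_cover_n_linear // -!mul_polyC => E.
by apply: (eq_of_subr_eq E); ring.
Qed.

Lemma zero_cover_phi_eq1 : phi = 1.
Proof.
apply/polyP => -[|m]; first by rewrite phi01 coef1.
have := zero_cover_weight (seq_delta m.+1) 1.
rewrite mulr1n -[RHS]add0r => /addIr; rewrite zero_cover1 coef1 /=.
rewrite (sum_coef_single (fun i => seq_delta m.+1 i *+ i) m.+1) => [|i /negbTE ne_im].
  rewrite /seq_delta eqxx -scalerMnr alg_polyC -polyCMn => /polyC_inj /eqP.
  by rewrite pchar0_mulrn_eq0 //= => /eqP.
by rewrite /seq_delta ne_im mul0rn.
Qed.

Lemma zero_cover2 f : Q f 2 = f 1%N + \sum_(j < size psi) psi`_j *: f j.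
Proof.
rewrite /omega_cover /= zero_cover_phi_eq1 size_poly1 !big_ord1 coef1 scale1r.
congr (_ + _); apply: eq_bigr => j _; rewrite big_ord1 coef1 scale1r add0n.
by rewrite [X in _ + X]big1 ?addr0 // => i _; rewrite scaler0.
Qed.

Lemma zero_cover_psi_eq0 : psi = 0.
Proof.
have sum_psi_delta (F : nat -> {poly k}) m : (forall i, i != m -> F i = 0) ->
    \sum_(j < size psi) psi`_j *: F j = (psi`_m)%:P * F m.
  by move=> F_single; rewrite (sum_coef_single F m) // mul_polyC.
apply/polyP => m; rewrite coef0.
have [->|ne_m1] := eqVneq m 1%N.
  have := RB_at 0 (seq_delta 0) (seq_delta 0) 2.
  rewrite zero_cover_delta0_eq hurwitz_mul_delta1 hurwitz_mulr1 hurwitz_mul1r !scale0r addr0.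
  rewrite zero_cover2 (sum_psi_delta _ 1%N) /seq_delta //= => [E|i /negbTE -> //].
  have : (psi`_1)%:P *+ 2 = 0 by apply: (eq_of_subr_eq (esym E)); ring.
  by rewrite -polyCMn => /polyC_inj /eqP; rewrite pchar0_mulrn_eq0 //= => /eqP.
have := zero_cover_weight (seq_delta m) 2.
rewrite !zero_cover2 (sum_psi_delta (seq_delta m) m) => [|i /negbTE ne_im]; last first.
  by rewrite /seq_delta ne_im.
rewrite (sum_psi_delta (fun j => seq_delta m j *+ j) m) => [|i /negbTE ne_im]; last first.
  by rewrite /seq_delta ne_im mul0rn.
rewrite /seq_delta eqxx eq_sym (negbTE ne_m1) mulr1 mulr_natr => E.
have : (psi`_m)%:P *+ m = (psi`_m)%:P by apply: (eq_of_subr_eq E); ring.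
case: m ne_m1 {E} => [_|m]; first by move/polyC_inj.
rewrite mulrS -[RHS]addr0 => ne_m1 /addrI; rewrite -polyCMn => /polyC_inj /eqP.
by rewrite pchar0_mulrn_eq0 // -eqSS (negbTE ne_m1) => /eqP.
Qed.

End UnitConstantTerm.

End ZeroOperatorCover.

Section ScaleOperatorCover.
Context {k : idomainType} {phi psi : {poly k}}.
Hypothesis k_char0 : [pchar k] =i pred0.
Hypothesis phi0 : phi = 0.
Hypothesis scale_cover_RB : forall c : k,
  is_RB_seq_op (-c) (omega_cover phi psi ( *:%R c : {poly k} -> {poly k})).

Local Notation Q c := (omega_cover phi psi ( *:%R c : {poly k} -> {poly k})).

Lemma scale_cover_geom c r q : Q c (seq_geom r q) = seq_geom (c *: r) (psi \Po q).
Proof.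
apply: functional_extensionality => n; rewrite /omega_cover phi0.
elim: n r => [|n IHn] r /=; first by rewrite /seq_geom !expr0 !mulr1.
rewrite size_poly0 big_ord0 add0r.
have shift_geom j : (fun m => seq_geom r q (m + j)) = seq_geom (r * q ^+ j) q.
  by apply: functional_extensionality => m; rewrite /seq_geom exprD mulrA mulrAC.
under eq_bigr => j _ do rewrite shift_geom IHn.
rewrite /seq_geom exprSr comp_polyE !mulr_sumr; apply: eq_bigr => j _.
by rewrite -!mul_polyC; ring.
Qed.

Let RB_at c f g n : hurwitz_mul (-c) (Q c f) (Q c g) n = Q c (hurwitz_mul (-c) (Q c f) g) n
    + Q c (hurwitz_mul (-c) f (Q c g)) n + (-c) *: Q c (hurwitz_mul (-c) f g) n.
Proof. exact: scale_cover_RB. Qed.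

Lemma scale_cover_psi_coef0 : psi`_0 = 0.
Proof.
set b := (psi`_0)%:P.
have Qgeom c : Q c (seq_geom 1 0) = seq_geom c%:P b.
  by rewrite scale_cover_geom comp_poly0r alg_polyC.
have E c : c != 0 -> b *+ 2 - c%:P * b ^+ 2 = (psi \Po b) *+ 2 - b.
  move=> nz_c; have := RB_at c (seq_geom 1 0) (seq_geom 1 0) 1.
  rewrite !Qgeom !hurwitz_mul_geom !mulr0 !mul0r !scaler0 !addr0 !add0r !mulr1 !mul1r.
  rewrite !scale_cover_geom /seq_geom !expr1 -!mul_polyC polyCN comp_poly0r -/b => E.
  apply: (@mulfI _ (c%:P ^+ 2)); first by rewrite expf_neq0 // polyC_eq0.
  by apply: (eq_of_subr_eq E); ring.
have two_nz : (2 : k) != 0 by rewrite pchar0_mulrn_eq0 // oner_eq0.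
have E12 := congr2 (fun x y => x - y) (E 1 (oner_neq0 _)) (E 2 two_nz).
rewrite polyCMn polyC1 in E12.
have : b ^+ 2 = 0 by apply: (eq_of_subr_eq E12); ring.
by move/eqP; rewrite expf_eq0 /= polyC_eq0 => /eqP.
Qed.

Lemma scale_cover_comp_idem : psi \Po psi = psi.
Proof.
have := RB_at 1 (seq_geom 1 'X) (seq_geom 1 0) 1.
rewrite !scale_cover_geom comp_polyXr comp_poly0r scale_cover_psi_coef0 scale1r.
rewrite !hurwitz_mul_geom !mulr0 !scaler0 !addr0 !mulr1 !scale_cover_geom comp_polyXr.
by rewrite /seq_geom !expr1 !mul1r scaleN1r scale1r !mul1r addrK => /esym.
Qed.

End ScaleOperatorCover.

Theorem theorem3p1 (k : idomainType) (hchar : [pchar k] =i pred0)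
    (phi psi : {poly k}) :
  (forall (lam : k) (R : comAlgType k) (P : R -> R),
      is_RB_op lam P -> is_RB_seq_op lam (omega_cover phi psi P))
  <->
  [\/ (phi = 0 /\ psi = 0), (phi = 1 /\ psi = 0) | (phi = 0 /\ psi = 'X)].
Proof.
split=> [cover_RB|]; last first.
  case=> -[-> ->] lam R P RB_P.
  - exact: omega_cover00_RB.
  - exact: omega_cover10_RB.
  - exact: omega_cover0X_RB.
have zero_RB lam := cover_RB lam {poly k} _ (zero_RB_op lam).
have scale_RB c := cover_RB (-c) {poly k} _ (scale_RB_op c).
have [phi00|phi01] := zero_cover_coef0 zero_RB.
  have phi0 := zero_cover_phi_eq0 zero_RB phi00.
  have [->|->] := comp_poly_idem (scale_cover_psi_coef0 hchar phi0 scale_RB)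
                                 (scale_cover_comp_idem hchar phi0 scale_RB).
  - exact: Or31.
  - exact: Or33.
by apply: Or32; split; [exact: zero_cover_phi_eq1 hchar zero_RB phi01 |
                         exact: zero_cover_psi_eq0 hchar zero_RB phi01].
Qed.
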